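(* Let $q\ge1$ be an integer and let $\mathbf{d}$ be a $(q+1)$-graphical sequence of length $n$ with $\sum_{v\in V}d_v=(q+1)m$ and $\Delta(\mathbf{d})=\Delta$. Assume $\left((q+1)^2+\Delta^{1/q}\right)\Delta\le\frac18 m$. Then for any $K\in\binom{V}{q+1}$, $$P_K(\mathbf{d})\le\frac{2\,q!\,D_K(\mathbf{d})}{(m(q+1))^q},\qquad\text{where } D_K(\mathbf{d})=\prod_{v\in K}d_v.$$
   Context: $V=[n]$. A sequence is $(q+1)$-graphical if it is the degree sequence of some $(q+1)$-uniform hypergraph on $V$ (a set of $(q+1)$-element subsets of $V$). $\Delta(\mathbf{d})=\max_v d_v$. For $K\in\binom V{q+1}$, $P_K(\mathbf{d})$ is the probability that a uniformly random $(q+1)$-uniform hypergraph on $V$ with degree sequence $\mathbf{d}$ contains the edge $K$. *)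

From HB Require Import structures.
From mathcomp Require Import all_boot all_order all_algebra.
From mathcomp Require Import all_classical all_reals all_analysis.
Set Implicit Arguments. Unset Strict Implicit. Unset Printing Implicit Defensive.
Import Order.TTheory GRing.Theory Num.Theory.

Definition uniform_hg (n k : nat) (H : {set {set 'I_n}}) : bool :=
  [forall e in H, #|e| == k].

Definition hdeg (n : nat) (H : {set {set 'I_n}}) (v : 'I_n) : nat :=
  #|[set e in H | v \in e]|.

Definition realizes (n k : nat) (d : 'I_n -> nat) (H : {set {set 'I_n}}) : bool :=
  uniform_hg k H && [forall v, hdeg H v == d v].

Definition graphical (n k : nat) (d : 'I_n -> nat) : Prop :=
  exists H : {set {set 'I_n}}, realizes k d H.

Definition maxdeg (n : nat) (d : 'I_n -> nat) : nat := \max_(v : 'I_n) d v.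

Definition PK (R : realType) (n k : nat) (d : 'I_n -> nat) (K : {set 'I_n}) : R :=
  (#|[set H : {set {set 'I_n}} | realizes k d H && (K \in H)]|%:R /
   #|[set H : {set {set 'I_n}} | realizes k d H]|%:R)%R.

Definition DK (n : nat) (d : 'I_n -> nat) (K : {set 'I_n}) : nat :=
  \prod_(v in K) d v.

(* Switching.  Write K = {v_0, ..., v_q} and, in a realization H containing K,
   arrange q further edges, each in some order, as the rows w_0, ..., w_(q-1) of a
   q x (q+1) array w.  Replacing K and the rows by the q+1 columns
   {v_i, w_0(i), ..., w_(q-1)(i)} preserves every degree and removes K.  Under the
   degree condition at least half of the (m (q+1)!)^q arrays are switchable (the
   three bad events are rare).  Conversely the switched realization H' and w
   determine H, and each column of w, completed by v_i, is an edge of H' through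
   v_i, so a given H' arises from at most D_K(d) (q!)^(q+1) pairs (H, w).  Hence
   |{H : K in H}| (m (q+1)!)^q <= 2 D_K(d) (q!)^(q+1) |{H}|. *)

From HB Require Import structures.
From mathcomp Require Import all_boot all_order all_algebra.
From mathcomp Require Import reals exp.
From mathcomp Require Import zify ring.
Set Implicit Arguments. Unset Strict Implicit. Unset Printing Implicit Defensive.
Import Order.TTheory GRing.Theory Num.Theory.

Lemma card_ffun_family (I T : finType) (F : I -> {set T}) :
  #|[set w : {ffun I -> T} | [forall i, w i \in F i]]| = \prod_i #|F i|.
Proof.
have -> : #|[set w : {ffun I -> T} | [forall i, w i \in F i]]| =
          #|(family (fun i => mem (F i)) : simpl_pred {ffun I -> T})|.
  by apply: eq_card => w; rewrite inE; apply/forallP/familyP.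
by rewrite (@card_family I (fun _ => T)) foldrE big_map big_enum.
Qed.

Lemma card_setI_sum (T : finType) (A : {pred T}) (P : pred T) :
  #|[set t in A | P t]| = \sum_(t in A) P t.
Proof.
rewrite -sum1_card [RHS]big_mkcond [LHS]big_mkcond /=; apply: eq_bigr => t _.
by rewrite inE; case: (t \in A); case: (P t).
Qed.

Lemma card_exists_leq_sum (I T : finType) (P : I -> pred T) (A : {pred T}) :
  #|[set t in A | [exists x, P x t]]| <= \sum_x #|[set t in A | P x t]|.
Proof.
under eq_bigr do rewrite card_setI_sum.
rewrite card_setI_sum exchange_big /=; apply: leq_sum => t _.
case: (boolP [exists x, P x t]) => // /existsP[x Px].
by rewrite (bigD1 x) //= Px.
Qed.

Lemma leq_sum_const (I : finType) (F : I -> nat) c :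
  (forall i, F i <= c) -> \sum_i F i <= #|I| * c.
Proof. by move=> Fc; rewrite -sum_nat_const; apply: leq_sum => i _. Qed.

Lemma prod_nat_const_but1 (I : finType) (g : I -> nat) j c :
  (forall k, k != j -> g k = c) -> \prod_k g k = g j * c ^ #|I|.-1.
Proof.
move=> gc; rewrite (bigD1 j) //= (eq_bigr (fun _ => c)) //.
by rewrite prod_nat_const cardC1.
Qed.

Lemma prod_nat_const_but2 (I : finType) (g : I -> nat) j l c : j != l ->
  (forall k, k != j -> k != l -> g k = c) -> \prod_k g k = g j * g l * c ^ #|I|.-2.
Proof.
move=> jl gc; rewrite (bigD1 j) //= (bigD1 l) 1?eq_sym //= mulnA.
rewrite (eq_bigr (fun _ => c)) => [|k /andP[]]; last exact: gc.
rewrite prod_nat_const; congr (_ * _ ^ _).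
have := cardD1 l (predC1 j); rewrite cardC1 inE eq_sym jl add1n => /(congr1 predn) ->.
by apply: eq_card => k; rewrite !inE andbC.
Qed.

Definition img (I T : finType) (f : I -> T) : {set T} := [set f i | i : I].

Lemma imgP (I T : finType) (f : I -> T) x : reflect (exists i, x = f i) (x \in img f).
Proof. by apply: (iffP imsetP) => [[i _ ->]|[i ->]]; exists i. Qed.

Lemma img_f (I T : finType) (f : I -> T) i : f i \in img f.
Proof. by apply/imgP; exists i. Qed.

Lemma card_img (I T : finType) (f : I -> T) : injective f -> #|img f| = #|I|.
Proof. by move=> f_inj; rewrite card_imset // cardsT. Qed.

Lemma in_img_sum (I T : finType) (f : I -> T) x : injective f ->
  (x \in img f : nat) = \sum_i (f i == x : nat).
Proof.
move=> f_inj; case: (boolP (x \in img f)) => [/imgP[i ->]|xNf].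
  rewrite (bigD1 i) //= eqxx big1 // => j /negbTE ji.
  by case: eqP => // /f_inj ij; rewrite ij eqxx in ji.
by rewrite big1 // => i _; case: eqP => // fi_x; rewrite -fi_x img_f in xNf.
Qed.

Definition uniform (T : finType) k (H : {set {set T}}) := {in H, forall e : {set T}, #|e| = k}.

Definition deg (T : finType) (H : {set {set T}}) x := #|[set e in H | x \in e]|.

Definition oedges (T : finType) q (H : {set {set T}}) : {set {ffun 'I_q.+1 -> T}} :=
  [set f : {ffun 'I_q.+1 -> T} | injectiveb f && (img f \in H)].

Definition coedges (T : finType) q (H : {set {set T}}) x : {set {ffun 'I_q -> T}} :=
  [set c : {ffun 'I_q -> T} | injectiveb c && (x \notin img c) && (x |: img c \in H)].

Section OrderedEdges.
Variables (T : finType) (q : nat) (H : {set {set T}}).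
Hypothesis uH : uniform q.+1 H.

Lemma card_coedges x : #|coedges q H x| <= deg H x * q`!.
Proof.
have sub : coedges q H x \subset [set c in predT | [exists e, (e \in H) && (x \in e) &&
    ((c \in ffun_on (mem (e :\ x))) && injectiveb c)]].
  apply/subsetP => c; rewrite !inE => /andP[/andP[c_inj xNc] xcH].
  apply/existsP; exists (x |: img c); rewrite xcH setU11 c_inj !andbT.
  apply/ffun_onP => k; rewrite !inE img_f orbT andbT.
  by apply: contraNneq xNc => <-; apply: img_f.
apply: leq_trans (subset_leq_card sub) _; apply: leq_trans (card_exists_leq_sum _ _) _.
rewrite /deg card_setI_sum big_distrl /= [X in _ <= X]big_mkcond /=.
apply: leq_sum => e _; case: ifPn => eH; last first.
  by rewrite (eq_card (B := pred0)) ?card0 // => c; rewrite !inE.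
case: (boolP (x \in e)) => xe; last first.
  by rewrite (eq_card (B := pred0)) ?card0 // => c; rewrite !inE ?andbF.
rewrite mul1n (eq_card (B := [set c in ffun_on (mem (e :\ x)) | injectiveb c])).
  rewrite card_inj_ffuns_on card_ord.
  by move: (cardsD1 x e); rewrite uH // xe add1n => -[<-]; rewrite ffactnn.
by move=> c; rewrite !inE.
Qed.

Lemma card_oedges_at (i : 'I_q.+1) y :
  #|[set f in oedges q H | f i == y]| <= #|coedges q H y|.
Proof.
pose drop_i (f : {ffun 'I_q.+1 -> T}) : {ffun 'I_q -> T} := [ffun k => f (lift i k)].
have drop_inj : {in [set f in oedges q H | f i == y] &, injective drop_i}.
  move=> f g; rewrite !inE => /andP[_ /eqP fi] /andP[_ /eqP gi] fg.
  apply/ffunP => j; case: (unliftP i j) => [k ->|->]; last by rewrite fi gi.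
  by have := congr1 (fun h : {ffun 'I_q -> T} => h k) fg; rewrite !ffunE.
rewrite -(card_in_imset drop_inj); apply/subset_leq_card/subsetP => c /imsetP[f].
rewrite !inE => /andP[/andP[/injectiveP f_inj fH] /eqP fi] ->.
have yNc : y \notin img (drop_i f).
  apply/imgP => -[k]; rewrite ffunE -fi => /f_inj/eqP.
  by rewrite (negbTE (neq_lift _ _)).
have -> : y |: img (drop_i f) = img f.
  apply/setP => z; rewrite !inE; apply/orP/imgP.
    case=> [/eqP ->|/imgP[k ->]]; first by exists i.
    by exists (lift i k); rewrite ffunE.
  case=> j ->; case: (unliftP i j) => [k ->|->]; last by rewrite fi; left.
  by right; apply/imgP; exists k; rewrite ffunE.
rewrite yNc fH !andbT; apply/injectiveP => k1 k2; rewrite !ffunE => /f_inj.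
exact: lift_inj.
Qed.

Lemma sum_card_oedges_at (i : 'I_q.+1) :
  \sum_y #|[set f in oedges q H | f i == y]| = #|oedges q H|.
Proof.
rewrite -sum1_card (partition_big (fun f : {ffun 'I_q.+1 -> T} => f i) xpredT) //=.
by apply: eq_bigr => y _; rewrite sum1dep_card.
Qed.

Lemma card_oedges : #|oedges q H| = #|H| * q.+1`!.
Proof.
rewrite -sum1_card.
rewrite (partition_big (fun f : {ffun 'I_q.+1 -> T} => img f) (mem H)) => [|f]; last first.
  by rewrite inE => /andP[].
rewrite /= -sum_nat_const; apply: eq_bigr => e eH.
have -> : q.+1`! = #|[set f : {ffun 'I_q.+1 -> T} in ffun_on (mem e) | injectiveb f]|.
  by rewrite card_inj_ffuns_on card_ord uH // ffactnn.
rewrite sum1dep_card.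
apply: eq_card => f; rewrite !inE; apply/idP/idP.
  case/andP=> /andP[f_inj _] /eqP <-; rewrite f_inj andbT.
  by apply/ffun_onP => i; apply: img_f.
case/andP=> /ffun_onP f_e f_inj; suff fe : img f = e by rewrite f_inj fe eH eqxx.
apply/eqP; rewrite eqEcard card_img ?card_ord ?uH //; last exact/injectiveP.
by rewrite leqnn andbT; apply/subsetP => z /imgP[i ->]; apply: f_e.
Qed.

End OrderedEdges.

Section Switching.
Variables (T : finType) (q : nat) (v : 'I_q.+1 -> T).
Hypotheses (q_gt0 : 0 < q) (v_inj : injective v).

Local Notation K := (img v).
(* The rows [w j] of a frame are the q edges switched together with K; the
   [i]-th new edge is the column [col w i] completed by [v i]. *)
Local Notation frame := {ffun 'I_q -> {ffun 'I_q.+1 -> T}}.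
Implicit Types (H : {set {set T}}) (w : frame).

Definition col w (i : 'I_q.+1) : {ffun 'I_q -> T} := [ffun j => w j i].
Definition new_edge w i := v i |: img (col w i).
Definition removed w := K |: [set img (w j) | j : 'I_q].
Definition added w := [set new_edge w i | i : 'I_q.+1].
Definition switch H w := (H :\: removed w) :|: added w.

Definition frames H := [set w : frame | [forall j, w j \in oedges q H]].
Definition coframes H := [set w : frame | [forall i, col w i \in coedges q H (v i)]].

Definition meets_K w := [exists j, exists a, w j a \in K].
(* [a == b] keeps the columns injective, [a == ord0] makes the rows distinct. *)
Definition overlapping w := [exists j, exists l, exists a, exists b,
  (j != l) && ((a == b) || (a == ord0)) && (w j a == w l b)].
Definition closes_edge H w := [exists i, col w i \in coedges q H (v i)].
Definition switchable H :=
  [set w in frames H | [&& ~~ meets_K w, ~~ overlapping w & ~~ closes_edge H w]].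

Section SwitchProperties.
Variables (H : {set {set T}}) (w : frame).
Hypotheses (KH : K \in H) (w_sw : w \in switchable H).

Lemma row_oedge j : injective (w j) /\ img (w j) \in H.
Proof.
move: w_sw; rewrite !inE => /andP[/forallP/(_ j)]; rewrite inE.
by case/andP=> /injectiveP.
Qed.

Lemma row_notin_K j a : w j a \notin K.
Proof.
move: w_sw; rewrite inE => /andP[_ /and3P[meetsN _ _]].
by apply: contra meetsN => wK; apply/existsP; exists j; apply/existsP; exists a.
Qed.

Lemma rows_apart j l a b : j != l -> (a == b) || (a == ord0) -> w j a != w l b.
Proof.
move: w_sw; rewrite inE => /andP[_ /and3P[_ overN _]] jl ab.
apply: contra overN => /eqP wjl; apply/existsP; exists j; apply/existsP; exists l.
by apply/existsP; exists a; apply/existsP; exists b; rewrite jl ab wjl eqxx.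
Qed.

Lemma col_inj i : injective (col w i).
Proof.
move=> j l; rewrite !ffunE => wjl; apply/eqP; apply: contraT => jl.
by have := rows_apart (a := i) (b := i) jl; rewrite eqxx wjl eqxx => /(_ isT).
Qed.

Lemma row_img_inj : injective (fun j => img (w j)).
Proof.
move=> j l /= wjl; apply/eqP; apply: contraT => jl.
have : w j ord0 \in img (w l) by rewrite -wjl img_f.
case/imgP => b wb; have := rows_apart (a := ord0) (b := b) jl.
by rewrite eqxx orbT wb eqxx => /(_ isT).
Qed.

Lemma v_notin_col i : v i \notin img (col w i).
Proof.
by apply/imgP => -[j]; rewrite ffunE => vw; have := row_notin_K j i; rewrite -vw img_f.
Qed.

Lemma new_edge_notin i : new_edge w i \notin H.
Proof.
move: w_sw; rewrite inE => /andP[_ /and3P[_ _ closesN]].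
apply: contra closesN => newH; apply/existsP; exists i.
by rewrite inE newH v_notin_col !andbT; apply/injectiveP; apply: col_inj.
Qed.

Lemma new_edge_inj : injective (new_edge w).
Proof.
move=> i k ik; have : v i \in new_edge w k by rewrite -ik setU11.
rewrite !inE => /orP[/eqP/v_inj //|/imgP[j]]; rewrite ffunE => vw.
by have := row_notin_K j k; rewrite -vw img_f.
Qed.

Lemma removed_sub : removed w \subset H.
Proof.
apply/subsetP => e; rewrite !inE => /orP[/eqP -> //|/imsetP[j _ ->]].
by case: (row_oedge j).
Qed.

Lemma disjoint_added : [disjoint H & added w].
Proof.
rewrite -setI_eq0; apply/eqP/setP => e; rewrite !inE; apply/negbTE.
by apply/andP => -[eH /imsetP[i _ e_new]]; have := new_edge_notin i; rewrite -e_new eH.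
Qed.

Lemma switchK : (switch H w :\: added w) :|: removed w = H.
Proof.
apply/setP => e; case: (boolP (e \in removed w)) => e_rem.
  by rewrite in_setU e_rem orbT (subsetP removed_sub _ e_rem).
rewrite in_setU (negbTE e_rem) orbF in_setD in_setU in_setD e_rem /=.
case: (boolP (e \in added w)) => e_add; rewrite ?orbF //=.
by rewrite (disjointFl disjoint_added e_add).
Qed.

Lemma switch_uniform : uniform q.+1 H -> uniform q.+1 (switch H w).
Proof.
move=> uH e; rewrite !inE => /orP[/andP[_ /uH //]|/imsetP[i _ ->]].
by rewrite cardsU1 v_notin_col card_img ?card_ord //; apply: col_inj.
Qed.

Lemma deg_switch x : deg (switch H w) x = deg H x.
Proof.
have removed_add :
    \sum_(e in removed w) (x \in e : nat) = \sum_(e in added w) (x \in e : nat).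
  rewrite big_setU1 /=; last first.
    by apply/imsetP => -[j _ Kw]; have := row_notin_K j ord0; rewrite Kw img_f.
  rewrite !big_imset /=; [|by move=> i k _ _ /new_edge_inj|by move=> j l _ _ /row_img_inj].
  have in_new i : (x \in new_edge w i : nat) = (v i == x : nat) + (x \in img (col w i) : nat).
    by rewrite !inE; case: eqVneq => [->|//]; rewrite (negbTE (v_notin_col i)).
  rewrite (eq_bigr _ (fun i _ => in_new i)) big_split /= in_img_sum //; congr (_ + _).
  rewrite (eq_bigr (fun i => \sum_j (w j i == x : nat))) => [|i _]; last first.
    by rewrite in_img_sum; [apply: eq_bigr => j _; rewrite ffunE | apply: col_inj].
  rewrite exchange_big /=; apply: eq_bigr => j _.
  by rewrite in_img_sum //; case: (row_oedge j).
rewrite /deg !card_setI_sum /switch (eq_bigl [predU H :\: removed w & added w]) => [|e].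
  rewrite bigU /=; last exact: disjointWl (subsetDl _ _) disjoint_added.
  by rewrite [RHS](big_setID (removed w)) /= (setIidPr removed_sub) addnC removed_add.
by rewrite !inE.
Qed.

Lemma K_notin_switch : K \notin switch H w.
Proof.
rewrite in_setU in_setD /removed setU11 /=; apply/imsetP => -[i _ K_new].
have j0 : 'I_q := Ordinal q_gt0.
have : col w i j0 \in new_edge w i by rewrite setU1r ?img_f.
by rewrite ffunE -K_new (negbTE (row_notin_K _ _)).
Qed.

Lemma switch_coframe : w \in coframes (switch H w).
Proof.
rewrite inE; apply/forallP => i; rewrite inE v_notin_col andbT.
apply/andP; split; first exact/injectiveP/col_inj.
by rewrite inE; apply/orP; right; apply/imsetP; exists i.
Qed.

End SwitchProperties.

Section SwitchableCount.
Variables (H : {set {set T}}) (D : nat).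
Hypotheses (uH : uniform q.+1 H) (degH : forall y, deg H y <= D).

Local Notation O := (oedges q H).
Local Notation N := #|oedges q H|.

Lemma card_oedges_at_le a y : #|[set f in O | f a == y]| <= D * q`!.
Proof.
apply: leq_trans (card_oedges_at _ _ _) _; apply: leq_trans (card_coedges uH _) _.
by rewrite leq_mul2r degH orbT.
Qed.

Lemma card_frames_family (G : 'I_q -> {set {ffun 'I_q.+1 -> T}}) :
  #|[set w in frames H | [forall k, w k \in G k]]| = \prod_k #|O :&: G k|.
Proof.
rewrite -card_ffun_family; apply: eq_card => w; rewrite !inE.
apply/andP/forallP => [[/forallP wO /forallP wG] k|wOG]; first by rewrite inE wO wG.
by split; apply/forallP => k; have := wOG k; rewrite inE => /andP[].
Qed.

Lemma card_frames : #|frames H| = N ^ q.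
Proof.
have := card_frames_family (fun _ => setT); rewrite (eq_card (B := frames H)).
  by under eq_bigr do rewrite setIT; rewrite prod_nat_const card_ord.
by move=> w; rewrite !inE andb_idr // => _; apply/forallP => k; rewrite inE.
Qed.

Lemma card_oedges_meet_K a : #|[set f in O | f a \in K]| <= q.+1 * (D * q`!).
Proof.
have sub : [set f in O | f a \in K] \subset [set f in O | [exists i, f a == v i]].
  apply/subsetP => f; rewrite !inE => /andP[-> /imgP[i ->]] /=.
  by apply/existsP; exists i.
apply: leq_trans (subset_leq_card sub) _; apply: leq_trans (card_exists_leq_sum _ _) _.
by rewrite -[X in X * _](card_ord q.+1); apply: leq_sum_const => i; apply: card_oedges_at_le.
Qed.

Lemma card_meets_K :
  #|[set w in frames H | meets_K w]| <= q * (q.+1 * (q.+1 * (D * q`!) * N ^ q.-1)).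
Proof.
apply: leq_trans (card_exists_leq_sum _ _) _.
rewrite -[X in X * _](card_ord q); apply: leq_sum_const => j.
apply: leq_trans (card_exists_leq_sum _ _) _.
rewrite -[X in X * _](card_ord q.+1); apply: leq_sum_const => a.
pose G k := if k == j then [set f : {ffun 'I_q.+1 -> T} | f a \in K] else setT.
rewrite (eq_card (B := [set w in frames H | [forall k, w k \in G k]])); last first.
  move=> w; rewrite !inE; congr (_ && _); apply/idP/forallP => [wK k|/(_ j)].
    by rewrite /G; case: eqP => [->|_]; rewrite inE.
  by rewrite /G eqxx inE.
rewrite card_frames_family (prod_nat_const_but1 (j := j) (c := N)) => [|k /negbTE kj].
  rewrite card_ord leq_mul2r /G eqxx; apply/orP; right.
  by apply: leq_trans (card_oedges_meet_K a); apply/subset_leq_card/subsetP => f; rewrite !inE.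
by rewrite /G kj setIT.
Qed.

Lemma card_frames_rows_meet j l a b : j != l ->
  #|[set w in frames H | w j a == w l b]| <= D * q`! * N ^ q.-1.
Proof.
move=> jl; have q_gt1 : 1 < q.
  by move: (ltn_ord j) (ltn_ord l) jl; rewrite -val_eqE /=; lia.
pose G y k := if k == j then [set f : {ffun 'I_q.+1 -> T} | f a == y]
  else if k == l then [set f : {ffun 'I_q.+1 -> T} | f b == y] else setT.
have sub : [set w in frames H | w j a == w l b] \subset
           [set w in frames H | [exists y, [forall k, w k \in G y k]]].
  apply/subsetP => w; rewrite !inE => /andP[-> /eqP wjl] /=; apply/existsP; exists (w l b).
  apply/forallP => k; rewrite /G; case: eqP => [->|_]; first by rewrite inE wjl.
  by case: eqP => [->|_]; rewrite inE.
apply: leq_trans (subset_leq_card sub) _; apply: leq_trans (card_exists_leq_sum _ _) _.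
have card_G y : #|[set w in frames H | [forall k, w k \in G y k]]| =
    #|[set f in O | f a == y]| * #|[set f in O | f b == y]| * N ^ q.-2.
  rewrite card_frames_family (prod_nat_const_but2 (c := N) jl) ?card_ord; last first.
    by move=> k /negbTE kj /negbTE kl; rewrite /G kj kl setIT.
  rewrite /G eqxx eq_sym (negbTE jl) eqxx.
  by congr (_ * _ * _); apply: eq_card => f; rewrite !inE.
under eq_bigr do rewrite card_G.
apply: (@leq_trans (\sum_y D * q`! * #|[set f in O | f b == y]| * N ^ q.-2)).
  by apply: leq_sum => y _; rewrite !leq_mul2r card_oedges_at_le !orbT.
rewrite -big_distrl -big_distrr /= sum_card_oedges_at -mulnA -expnS.
by rewrite (_ : q.-2.+1 = q.-1) //; lia.
Qed.

Lemma card_overlapping :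
  #|[set w in frames H | overlapping w]| <= q * (q * (2 * q.+1 * (D * q`! * N ^ q.-1))).
Proof.
set X := D * q`! * N ^ q.-1.
have delta (a : 'I_q.+1) : \sum_b (a == b : nat) = 1.
  by rewrite (bigD1 a) //= eqxx big1 // => b; rewrite eq_sym => /negbTE ->.
apply: leq_trans (card_exists_leq_sum _ _) _.
rewrite -[X in X * _](card_ord q); apply: leq_sum_const => j.
apply: leq_trans (card_exists_leq_sum _ _) _.
rewrite -[X in X * _](card_ord q); apply: leq_sum_const => l.
apply: leq_trans (card_exists_leq_sum _ _) _.
apply: (@leq_trans (\sum_a \sum_b ((a == b) + (a == ord0)) * X)).
  apply: leq_sum => a _; apply: leq_trans (card_exists_leq_sum _ _) _.
  apply: leq_sum => b _.
  case: (boolP ((j != l) && ((a == b) || (a == ord0)))) => [/andP[jl ab]|bad].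
    rewrite (eq_card (B := [set w in frames H | w j a == w l b])) => [|w]; last first.
      by rewrite !inE.
    apply: leq_trans (card_frames_rows_meet _ _ jl) _; rewrite leq_pmull //.
    by move: ab; case: (a == b); case: (a == ord0).
  by rewrite (eq_card (B := pred0)) ?card0 // => w; rewrite !inE ?andbF.
under eq_bigr do rewrite -big_distrl big_split /= delta sum_nat_const card_ord.
rewrite -big_distrl big_split /= sum_nat_const card_ord muln1 -big_distrr /=.
under eq_bigr do rewrite eq_sym.
by rewrite delta muln1 mul2n -addnn.
Qed.

Lemma card_closes_edge : #|[set w in frames H | closes_edge H w]| <= q.+1 * (D * q`!) ^ q.+1.
Proof.
apply: leq_trans (card_exists_leq_sum _ _) _.
rewrite -[X in X * _](card_ord q.+1); apply: leq_sum_const => i.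
have sub : [set w in frames H | col w i \in coedges q H (v i)] \subset
    [set w in frames H | [exists c, (c \in coedges q H (v i)) &&
      [forall k, w k \in [set f : {ffun 'I_q.+1 -> T} | f i == c k]]]].
  apply/subsetP => w; rewrite inE => /andP[wF wi]; rewrite inE wF /=.
  by apply/existsP; exists (col w i); rewrite wi; apply/forallP => k; rewrite !inE ffunE.
apply: leq_trans (subset_leq_card sub) _; apply: leq_trans (card_exists_leq_sum _ _) _.
apply: (@leq_trans (\sum_(c in coedges q H (v i)) (D * q`!) ^ q)).
  rewrite [X in _ <= X]big_mkcond /=; apply: leq_sum => c _; case: ifPn => cC; last first.
    by rewrite (eq_card (B := pred0)) ?card0 // => w; rewrite !inE ?andbF.
  rewrite (eq_card (B := [set w in frames H | [forall k, w k \in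
    [set f : {ffun 'I_q.+1 -> T} | f i == c k]]])) => [|w]; last by rewrite !inE.
  rewrite card_frames_family -[X in _ ^ X](card_ord q) -prod_nat_const.
  apply: leq_prod => k _; apply: leq_trans (card_oedges_at_le i (c k)).
  by apply/subset_leq_card/subsetP => f; rewrite !inE.
rewrite sum_nat_const expnS leq_mul2r; apply/orP; right.
by apply: leq_trans (card_coedges uH _) _; rewrite leq_mul2r degH orbT.
Qed.

(* The hypotheses bound the frames meeting K or overlapping by 3/8 of all
   frames, and those closing an edge by 1/8. *)
Lemma card_switchable :
  8 * q * q.+1 * q.+1 * (D * q`!) <= N -> 8 * (q.+1 * (D * q`!) ^ q.+1) <= N ^ q ->
  N ^ q <= 2 * #|switchable H|.
Proof.
move=> N_large Nq_large.
set X1 := #|[set w in frames H | meets_K w]|.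
set X2 := #|[set w in frames H | overlapping w]|.
set X3 := #|[set w in frames H | closes_edge H w]|.
have frames_le : N ^ q <= #|switchable H| + X1 + X2 + X3.
  rewrite -card_frames; apply: (@leq_trans #|switchable H :|: [set w in frames H | meets_K w]
    :|: [set w in frames H | overlapping w] :|: [set w in frames H | closes_edge H w]|).
    apply/subset_leq_card/subsetP => w; rewrite !inE => -> /=.
    by case: (meets_K w); case: (overlapping w); case: (closes_edge H w).
  apply: leq_trans (leq_card_setU _ _) _; rewrite leq_add2r.
  by apply: leq_trans (leq_card_setU _ _) _; rewrite leq_add2r leq_card_setU.
have := card_meets_K; have := card_overlapping; have := card_closes_edge.
move: frames_le N_large Nq_large.
have -> : N ^ q = N * N ^ q.-1 by rewrite -expnS prednK.
set M := N ^ q.-1; set Dq := D * q`!.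
move=> frames_le N_large Nq_large X3_le X2_le X1_le.
have X12_le : 8 * (X1 + X2) <= 3 * (N * M).
  apply: (@leq_trans (3 * (8 * q * q.+1 * q.+1 * Dq) * M)); first nia.
  by rewrite -mulnA leq_mul2l leq_mul2r N_large !orbT.
nia.
Qed.


End SwitchableCount.

Lemma card_coframes H : uniform q.+1 H -> #|coframes H| <= \prod_i deg H (v i) * q`! ^ q.+1.
Proof.
move=> uH; pose cols (w : frame) : {ffun 'I_q.+1 -> {ffun 'I_q -> T}} := [ffun i => col w i].
have cols_inj : injective cols.
  move=> w1 w2 w12; apply/ffunP => j; apply/ffunP => i.
  by have := congr1 (fun t : {ffun 'I_q.+1 -> {ffun 'I_q -> T}} => t i j) w12; rewrite !ffunE.
rewrite -(card_imset _ cols_inj).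
apply: (@leq_trans #|[set t : {ffun 'I_q.+1 -> {ffun 'I_q -> T}} |
    [forall i, t i \in coedges q H (v i)]]|).
  apply/subset_leq_card/subsetP => _ /imsetP[w + ->]; rewrite !inE => /forallP wC.
  by apply/forallP => i; rewrite ffunE wC.
rewrite card_ffun_family -[X in _ ^ X](card_ord q.+1) -prod_nat_const -big_split /=.
by apply: leq_prod => i _; apply: card_coedges.
Qed.

End Switching.

Lemma card_sigma_set (A B : finType) (X : {set A}) (F : A -> {set B}) :
  #|[set p : A * B | (p.1 \in X) && (p.2 \in F p.1)]| = \sum_(a in X) #|F a|.
Proof.
rewrite -sum1dep_card -(pair_big_dep (fun a => a \in X) (fun a b => b \in F a) (fun _ _ => 1)).
by apply: eq_bigr => a _; rewrite sum1_card.
Qed.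

Lemma fact_leq_exp k : k.+1`! <= k.+1 ^ k.
Proof.
elim: k => // k IHk; rewrite factS expnS leq_mul2l; apply/orP; right.
by apply: leq_trans IHk _; case: k => // k; rewrite leq_exp2r.
Qed.

Section Realizations.
Variables (n q m : nat) (d : 'I_n -> nat).
Hypotheses (q_gt0 : 0 < q) (d_sum : \sum_x d x = q.+1 * m).

Local Notation realizations := [set H : {set {set 'I_n}} | realizes q.+1 d H].

Section OneRealization.
Variables (H : {set {set 'I_n}}) (rH : realizes q.+1 d H).

Lemma realizes_uniform : uniform q.+1 H.
Proof. by move: rH => /andP[/forall_inP uH _] e /uH /eqP. Qed.

Lemma realizes_deg x : deg H x = d x.
Proof. by move: rH => /andP[_ /forallP/(_ x) /eqP]. Qed.

Lemma card_realization : #|H| = m.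
Proof.
apply/eqP; rewrite -(eqn_pmul2l (ltn0Sn q)) -d_sum; apply/eqP.
under eq_bigr do rewrite -realizes_deg /deg card_setI_sum.
rewrite exchange_big /= mulnC -sum_nat_const; apply: eq_bigr => e eH.
by rewrite -(realizes_uniform eH) -sum1_card big_mkcond.
Qed.

End OneRealization.

Section SwitchingBound.
Variables (v : 'I_q.+1 -> 'I_n).
Hypotheses (v_inj : injective v) (m_large : 8 * q.+1 ^ 2 * maxdeg d <= m)
  (mq_large : 8 ^ q * maxdeg d ^ q.+1 <= m ^ q).

Local Notation K := (img v).

Lemma card_switchable_realization H : realizes q.+1 d H ->
  (m * q.+1`!) ^ q <= 2 * #|switchable v H|.
Proof.
move=> rH; have uH := realizes_uniform rH.
have degH y : deg H y <= maxdeg d by rewrite (realizes_deg rH); apply: leq_bigmax.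
have N_large : m * q.+1`! <= #|oedges q H| by rewrite card_oedges // card_realization.
have fact_le := fact_leq_exp q.
have eight_le : 8 <= 8 ^ q by case: (q) q_gt0 => // k _; rewrite expnS leq_pmulr ?expn_gt0.
apply: leq_trans (card_switchable v q_gt0 uH degH _ _); first by rewrite leq_exp2r.
- apply: leq_trans N_large; rewrite factS.
  have -> : 8 * q * q.+1 * q.+1 * (maxdeg d * q`!) = (8 * q.+1 ^ 2 * maxdeg d) * (q * q`!).
    by rewrite expnS expn1; ring.
  by apply: leq_mul m_large _; rewrite leq_mul2r leqnSn orbT.
- apply: (@leq_trans ((m * q.+1`!) ^ q)); last by rewrite leq_exp2r.
  rewrite factS in fact_le *; rewrite !expnMn [q`! ^ q.+1]expnS.
  set X := maxdeg d ^ q.+1; set Y := q`! ^ q.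
  have -> : 8 * (q.+1 * (X * (q`! * Y))) = (8 * X) * (q.+1 * q`!) * Y by ring.
  have -> : m ^ q * (q.+1 ^ q * Y) = m ^ q * q.+1 ^ q * Y by ring.
  rewrite leq_mul2r; apply/orP; right; apply: leq_mul => //.
  by apply: leq_trans mq_large; rewrite leq_mul2r eight_le orbT.
Qed.

Lemma card_coframes_realization H : realizes q.+1 d H ->
  #|coframes v H| <= DK d K * q`! ^ q.+1.
Proof.
move=> rH; apply: leq_trans (card_coframes v (realizes_uniform rH)) _.
rewrite /DK big_imset /= => [|i j _ _ /v_inj //].
by apply/eq_leq; congr (_ * _); apply: eq_big => // i _; rewrite (realizes_deg rH).
Qed.

Lemma card_realizations_with_K :
  #|[set H | realizes q.+1 d H && (K \in H)]| * (m * q.+1) ^ q <=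
  2 * q`! * DK d K * #|realizations|.
Proof.
set withK := [set H | _ && _]; set withoutK := [set H | realizes q.+1 d H && (K \notin H)].
set pairsK := [set p | (p.1 \in withK) && (p.2 \in switchable v p.1)].
set pairsNK := [set p | (p.1 \in withoutK) && (p.2 \in coframes v p.1)].
have pairsK_large : #|withK| * (m * q.+1`!) ^ q <= 2 * #|pairsK|.
  rewrite card_sigma_set big_distrr -sum_nat_const /=; apply: leq_sum => H.
  by rewrite inE => /andP[rH _]; apply: card_switchable_realization.
have pairsNK_small : #|pairsNK| <= #|realizations| * (DK d K * q`! ^ q.+1).
  rewrite card_sigma_set (@leq_trans (#|withoutK| * (DK d K * q`! ^ q.+1))) //.
    rewrite -sum_nat_const; apply: leq_sum => H.
    by rewrite inE => /andP[rH _]; apply: card_coframes_realization.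
  rewrite leq_mul2r; apply/orP; right; apply/subset_leq_card/subsetP => H.
  by rewrite !inE => /andP[].
pose switch_pair (p : {set {set 'I_n}} * {ffun 'I_q -> {ffun 'I_q.+1 -> 'I_n}}) :=
  (switch v p.1 p.2, p.2).
have switch_pair_inj : {in pairsK &, injective switch_pair}.
  move=> [H1 w1] [H2 w2]; rewrite inE /= => /andP[+ w1S]; rewrite inE => /andP[_ K1].
  rewrite inE /= => /andP[+ w2S]; rewrite inE => /andP[_ K2] [H12 w12].
  rewrite w12 in H12 w1S *.
  by rewrite -(switchK K1 w1S) -(switchK K2 w2S) H12.
have switch_pairsK : switch_pair @: pairsK \subset pairsNK.
  apply/subsetP => _ /imsetP[[H w] + ->]; rewrite inE /= => /andP[+ wS].
  rewrite inE => /andP[rH KH]; rewrite inE /= (switch_coframe wS) andbT.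
  rewrite inE (K_notin_switch q_gt0 wS) andbT; apply/andP; split.
    by apply/forall_inP => e /(switch_uniform wS (realizes_uniform rH)) ->.
  by apply/forallP => x; apply/eqP; rewrite -(realizes_deg rH) -(deg_switch v_inj KH wS x).
have pairsK_small : #|pairsK| <= #|pairsNK|.
  by rewrite -(card_in_imset switch_pair_inj) subset_leq_card.
have key := leq_trans pairsK_large (leq_mul (leqnn 2) (leq_trans pairsK_small pairsNK_small)).
have qfact_gt0 : 0 < q`! ^ q by rewrite expn_gt0 fact_gt0.
rewrite -(leq_pmul2r qfact_gt0).
apply: leq_trans (leq_trans (eq_leq _) key) (eq_leq _); rewrite ?factS ?expnMn ?expnS; ring.
Qed.

End SwitchingBound.
End Realizations.

Local Open Scope ring_scope.

Lemma ler_ratio_nat (R : numFieldType) (a t c s : nat) :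
  (a <= t)%N -> (0 < a -> 0 < s)%N -> (a * s <= c * t)%N ->
  a%:R / t%:R <= c%:R / s%:R :> R.
Proof.
move=> a_le_t s_gt0 acst; have [->|a_gt0] := posnP a; first by rewrite mul0r divr_ge0.
have t_gt0 : (0 < t)%N := leq_trans a_gt0 a_le_t.
rewrite ler_pdivrMr ?ltr0n // mulrAC ler_pdivlMr ?ltr0n ?s_gt0 //.
by rewrite -!natrM ler_nat.
Qed.

Lemma degree_condition_nat (R : realType) (q m D : nat) : (1 <= q)%N ->
  ((q.+1 ^ 2)%N%:R + D%:R `^ q%:R^-1) * D%:R <= (m%:R / 8 : R) ->
  (8 * q.+1 ^ 2 * D <= m)%N /\ (8 ^ q * D ^ q.+1 <= m ^ q)%N.
Proof.
move=> q_gt0; set x := D%:R `^ q%:R^-1; rewrite mulrDl => cond.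
have x_ge0 : 0 <= x by apply: powR_ge0.
have xq : x ^+ q = D%:R.
  rewrite -powR_mulrn // /x -powRrM mulVf ?powRr1 //.
  by rewrite pnatr_eq0 -lt0n.
split.
  have aD_le : (q.+1 ^ 2)%N%:R * D%:R <= (m%:R / 8 : R).
    by apply: le_trans cond; rewrite lerDl; apply: mulr_ge0.
  by move: aD_le; rewrite ler_pdivlMr ?ltr0n // -!natrM ler_nat; lia.
have xD_le : x * D%:R <= m%:R / 8 by apply: le_trans cond; rewrite lerDr; apply: mulr_ge0.
have xDq_le : (x * D%:R) ^+ q <= (m%:R / 8) ^+ q.
  by apply: lerXn2r => //; rewrite nnegrE; [apply: mulr_ge0 | apply: divr_ge0].
rewrite exprMn xq exprMn exprVn ler_pdivlMr ?exprn_gt0 // in xDq_le.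
rewrite -(ler_nat R) !natrM !natrX exprS.
by move: xDq_le; rewrite mulrC mulrA.
Qed.

Unset Implicit Arguments.

Theorem lemma2p3 (R : realType) (q n m : nat) (d : 'I_n -> nat) :
  (1 <= q)%N ->
  graphical q.+1 d ->
  (\sum_(v : 'I_n) d v)%N = (q.+1 * m)%N ->
  ((((q.+1) ^ 2)%N%:R + (maxdeg d)%:R `^ (q%:R^-1)) * (maxdeg d)%:R
     <= (m%:R / 8 : R)) ->
  forall K : {set 'I_n}, #|K| = q.+1 ->
  PK R q.+1 d K <= 2 * (q`!)%:R * (DK d K)%:R / ((m * q.+1)%N%:R ^+ q).
Proof.
move=> q_gt0 _ d_sum cond K cardK.
have [m_large mq_large] := degree_condition_nat q_gt0 cond.
pose v (i : 'I_q.+1) := enum_val (cast_ord (esym cardK) i).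
have v_inj : injective v by move=> i j /enum_val_inj/cast_ord_inj.
have Kv : img v = K.
  apply/eqP; rewrite eqEcard card_img // card_ord cardK leqnn andbT.
  by apply/subsetP => x /imgP[i ->]; apply: enum_valP.
rewrite /PK -natrX -!natrM; apply: ler_ratio_nat.
- by apply/subset_leq_card/subsetP => H; rewrite !inE => /andP[].
- rewrite card_gt0 => /set0Pn[H]; rewrite inE => /andP[rH KH].
  rewrite expn_gt0 muln_gt0 andbT -(card_realization d_sum rH) card_gt0.
  by apply/orP; left; apply/set0Pn; exists K.
- by rewrite -Kv; apply: card_realizations_with_K.
Qed.
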